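(* Let $\alpha\in[0,1)$ and let $$X(\sqrt{t},\alpha)=\{\sqrt{n}\,e^{2\pi i n\alpha}\ :\ n\in\mathbb{N}\}\subset\mathbb{C}.$$ (a) If $\alpha$ is badly approximable and its partial quotients are all bounded by the positive integer $B$, then $X(\sqrt{t},\alpha)$ is $6\sqrt{B}$-relatively dense. (b) If $X(\sqrt{t},\alpha)$ is $r$-relatively dense, then $\alpha$ is badly approximable and all its partial quotients are bounded by $B=\lfloor 96r^2\rfloor$. (c) If $\alpha$ is badly approximable with constant $C$, then $X(\sqrt{t},\alpha)$ is $\sqrt{C}/2$-uniformly discrete. (d) If $X(\sqrt{t},\alpha)$ is $s$-uniformly discrete, then $\alpha$ is badly approximable with constant $C=s^2/53$.
   Context: $\mathbb{C}$ is identified with $\mathbb{R}^2$, and $B(x,r)$ denotes the open disk of radius $r$ centered at $x$. A set $X\subset\mathbb{C}$ is $r$-relatively dense ($r>0$) if $B(x,r)\cap X\ne\emptyset$ for every $x\in\mathbb{C}$. It is $s$-uniformly discrete ($s>0$) if $\mathrm{Card}(B(x,s)\cap X)\le1$ for every $x\in\mathbb{C}$. A real number $\alpha$ is badly approximable with constant $C>0$ if $q|q\alpha-p|\ge C$ for all $(p,q)\in\mathbb{Z}\times\mathbb{N}$. Equivalently, the partial quotients $a_1,a_2,\dots$ of its continued fraction expansion $\alpha=[0;a_1,a_2,\dots]$ are bounded by some positive integer $B$. *)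

(* C is identified with R^2, points are pairs (R * R). *)
From Stdlib Require Import Reals Lra Lia ZArith.
Open Scope R_scope.

Definition dist2 (z w : R * R) : R :=
  sqrt ((fst z - fst w) ^ 2 + (snd z - snd w) ^ 2).

Definition in_ball (x : R * R) (r : R) (z : R * R) : Prop := dist2 x z < r.

Definition Xpt (alpha : R) (n : nat) : R * R :=
  (sqrt (INR n) * cos (2 * PI * INR n * alpha),
   sqrt (INR n) * sin (2 * PI * INR n * alpha)).

Definition inX (alpha : R) (z : R * R) : Prop :=
  exists n : nat, (1 <= n)%nat /\ z = Xpt alpha n.

Definition rel_dense (X : R * R -> Prop) (r : R) : Prop :=
  0 < r /\ forall x : R * R, exists z, in_ball x r z /\ X z.

Definition unif_discrete (X : R * R -> Prop) (s : R) : Prop :=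
  0 < s /\ forall x z w : R * R,
    in_ball x s z -> X z -> in_ball x s w -> X w -> z = w.

Definition bad_approx_const (alpha C : R) : Prop :=
  0 < C /\ forall (p : Z) (q : nat), (1 <= q)%nat ->
    INR q * Rabs (INR q * alpha - IZR p) >= C.

Definition bad_approx (alpha : R) : Prop := exists C, bad_approx_const alpha C.

(* Continued fraction via the Gauss map: x_0 = alpha,
   x_k = 1/x_{k-1} - floor(1/x_{k-1}) (expansion stops when x_{k-1} = 0),
   partial quotient a_{k+1} = floor(1/x_k) when x_k <> 0. *)
Definition gauss (x : R) : R :=
  if Req_EM_T x 0 then 0 else / x - IZR (Int_part (/ x)).

Definition cf_rem (alpha : R) (k : nat) : R := Nat.iter k gauss alpha.

(* a_{k+1}, meaningful when cf_rem alpha k <> 0 *)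
Definition partial_quotient (alpha : R) (k : nat) : Z :=
  Int_part (/ cf_rem alpha k).

Definition pq_bounded (alpha : R) (B : Z) : Prop :=
  forall k : nat, cf_rem alpha k <> 0 -> (partial_quotient alpha k <= B)%Z.

From Stdlib Require Import Reals Lra Lia ZArith.
Open Scope R_scope.

(* The points of indices [m < n] are at distance
   [sqrt ((sqrt n - sqrt m)^2 + 2 sqrt (n m) (1 - cos (2 pi (n - m) alpha)))], and [1 - cos (2 pi w)]
   is comparable to the squared distance from [w] to the integers.
   (c), (d): two points are close iff [n - m] is small compared to [sqrt m] and [(n - m) alpha] is
   close to an integer.  Bad approximability rules this out; conversely a good approximation
   [q |q alpha - p| < s^2 / 53] yields the close pair [m ~ q^2 / (2 s^2)] and [m + q].
   (a): the points with [sqrt n] within [h ~ 2 sqrt B] of a radius [rho] have about [4 rho h]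
   consecutive indices.  If [q_k <= 4 rho h < q_(k+1) <= (B + 1) q_k], the values [m alpha] for
   [m < q_k] come within [O(B / (rho h))] of every point mod 1, so some point lies within
   [O(sqrt B)] of any point of the circle of radius [rho].
   (b): conversely, if [p / q] is a good approximation, the points with [sqrt n ~ 2 q r] all lie near
   the [q] rays of angles [2 pi (j + n (q alpha - p)) / q], which leaves an empty disk of radius [r]
   between two of them; then [a_(k+1) q_k |q_k alpha - p_k| <= 1] bounds the partial quotients. *)

Lemma sqrt_lt_of_lt_sqr (a r : R) : 0 < r -> a < r ^ 2 -> sqrt a < r.
Proof.
  intros Hr Ha. destruct (Rle_lt_dec a 0) as [Hneg | Hpos].
  - rewrite sqrt_neg_0 by exact Hneg. exact Hr.
  - rewrite <- (sqrt_pow2 r) by lra. apply sqrt_lt_1_alt. lra.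
Qed.

Lemma le_sqrt_of_sqr_le (a r : R) : 0 <= r -> r ^ 2 <= a -> r <= sqrt a.
Proof.
  intros Hr Ha. rewrite <- (sqrt_pow2 r Hr). apply sqrt_le_1_alt. exact Ha.
Qed.

Lemma IZR_le_Int_part (z : Z) (x : R) : IZR z <= x -> (z <= Int_part x)%Z.
Proof.
  intros Hz. pose proof (base_Int_part x) as [_ Hx].
  apply Z.lt_succ_r, lt_IZR. rewrite succ_IZR. lra.
Qed.

Lemma INR_Z_to_nat (z : Z) : (0 <= z)%Z -> INR (Z.to_nat z) = IZR z.
Proof. intros Hz. rewrite INR_IZR_INZ, Z2Nat.id by exact Hz. reflexivity. Qed.

Lemma exists_nat_above (T : R) : 0 <= T -> exists m : nat, (1 <= m)%nat /\ T < INR m <= T + 1.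
Proof.
  intros HT. pose proof (archimed T) as [Hup1 Hup2].
  assert (Hup : (0 <= up T)%Z) by (apply le_IZR; lra).
  exists (Z.to_nat (up T)). rewrite INR_Z_to_nat by exact Hup.
  split; [apply INR_lt; rewrite INR_Z_to_nat by exact Hup; simpl; lra | lra].
Qed.

Lemma sin_sqr_le_sqr (u : R) : sin u ^ 2 <= u ^ 2.
Proof.
  assert (Hpos : forall v, 0 < v -> sin v ^ 2 <= v ^ 2).
  { intros v Hv. destruct (Rle_lt_dec v PI) as [Hle | Hgt].
    - pose proof (sin_ge_0 v ltac:(lra) Hle). pose proof (sin_lt_x v Hv). nra.
    - pose proof (SIN_bound v). pose proof PI2_3_2. nra. }
  destruct (Rtotal_order u 0) as [Hu | [-> | Hu]].
  - replace (sin u ^ 2) with (sin (- u) ^ 2) by (rewrite sin_neg; ring).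
    replace (u ^ 2) with ((- u) ^ 2) by ring. apply Hpos. lra.
  - rewrite sin_0. lra.
  - exact (Hpos u Hu).
Qed.

Lemma one_sub_cos_le (x : R) : 1 - cos x <= x ^ 2 / 2.
Proof.
  replace x with (2 * (x / 2)) at 1 by field.
  rewrite cos_2a_sin. pose proof (sin_sqr_le_sqr (x / 2)). nra.
Qed.

Lemma one_sub_cos_2PI_le (e : R) : 1 - cos (2 * PI * e) <= 32 * e ^ 2.
Proof.
  pose proof (one_sub_cos_le (2 * PI * e)). pose proof PI_4. pose proof PI_RGT_0.
  assert (PI ^ 2 <= 16) by nra. pose proof (pow2_ge_0 e). nra.
Qed.

Lemma cos_add_2PI_IZR (x : R) (t : Z) : cos (x + 2 * PI * IZR t) = cos x.
Proof.
  destruct (Z_le_gt_dec 0 t) as [Ht | Ht].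
  - rewrite <- (INR_Z_to_nat t Ht).
    replace (x + 2 * PI * INR (Z.to_nat t)) with (x + 2 * INR (Z.to_nat t) * PI) by ring.
    apply cos_period.
  - rewrite <- (cos_period (x + 2 * PI * IZR t) (Z.to_nat (- t))).
    rewrite INR_Z_to_nat, opp_IZR by lia. f_equal. ring.
Qed.

Lemma sin_ge_third (t : R) : 0 <= t <= PI / 2 -> t / 3 <= sin t.
Proof.
  intros Ht. pose proof PI2_3_2. pose proof PI_4.
  pose proof (SIN t ltac:(lra) ltac:(lra)) as [Hlb _].
  enough (t / 3 <= sin_lb t) by lra.
  unfold sin_lb, sin_approx, sin_term. cbn [sum_f_R0].
  replace (INR (fact (2 * 0 + 1))) with 1 by (simpl; lra).
  replace (INR (fact (2 * 1 + 1))) with 6 by (simpl; lra).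
  replace (INR (fact (2 * 2 + 1))) with 120 by (simpl; lra).
  replace (INR (fact (2 * 3 + 1))) with 5040 by (simpl; lra).
  simpl. assert (t ^ 2 <= 4) by nra. assert (0 <= t ^ 5) by (apply pow_le; lra).
  nra.
Qed.

(* With [y = w - l] for the integer [l] nearest to [w]: [1 - cos (2 pi w) = 2 sin^2 (pi y)] and
   [sin (pi |y|) >= pi |y| / 3] since [|y| <= 1/2]. *)
Lemma one_sub_cos_2PI_ge (w d : R) :
  0 <= d -> (forall l : Z, d <= Rabs (w - IZR l)) -> 2 * d ^ 2 <= 1 - cos (2 * PI * w).
Proof.
  intros Hd Hl.
  set (l := Int_part (w + / 2)).
  pose proof (base_Int_part (w + / 2)) as [Hl1 Hl2]. fold l in Hl1, Hl2.
  set (y := w - IZR l).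
  specialize (Hl l). fold y in Hl.
  replace (2 * PI * w) with (2 * (PI * y) + 2 * PI * IZR l) by (unfold y; ring).
  rewrite cos_add_2PI_IZR, cos_2a_sin.
  assert (Hsin : sin (PI * y) * sin (PI * y) = sin (PI * Rabs y) * sin (PI * Rabs y)).
  { unfold Rabs. destruct (Rcase_abs y); [|reflexivity].
    replace (PI * - y) with (- (PI * y)) by ring. rewrite sin_neg. ring. }
  replace (1 - (1 - 2 * sin (PI * y) * sin (PI * y))) with (2 * (sin (PI * y) * sin (PI * y))) by ring.
  rewrite Hsin.
  pose proof PI2_3_2. pose proof PI_4.
  assert (Hy : 0 <= Rabs y <= / 2) by (unfold y, Rabs; destruct (Rcase_abs (w - IZR l)); lra).
  pose proof (sin_ge_third (PI * Rabs y) ltac:(nra)).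
  assert (d * 3 <= PI * Rabs y) by nra.
  nra.
Qed.

Lemma dist2_comm (z w : R * R) : dist2 z w = dist2 w z.
Proof. unfold dist2. f_equal. ring. Qed.

Lemma dist2_triangle (x z w : R * R) : dist2 z w <= dist2 x z + dist2 x w.
Proof.
  assert (Heuc : forall a b, dist2 a b = dist_euc (fst a) (snd a) (fst b) (snd b))
    by (intros; unfold dist2, dist_euc, Rsqr; f_equal; ring).
  rewrite (dist2_comm x z), !Heuc. apply triangle.
Qed.

Definition midpoint (z w : R * R) : R * R := ((fst z + fst w) / 2, (snd z + snd w) / 2).

Lemma dist2_midpoint_l (z w : R * R) : dist2 (midpoint z w) z = dist2 z w / 2.
Proof.
  unfold dist2, midpoint; cbn [fst snd].
  replace (((fst z + fst w) / 2 - fst z) ^ 2 + ((snd z + snd w) / 2 - snd z) ^ 2)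
    with (((fst z - fst w) ^ 2 + (snd z - snd w) ^ 2) / 2 ^ 2) by field.
  rewrite sqrt_div_alt, sqrt_pow2 by lra. reflexivity.
Qed.

Lemma dist2_midpoint_r (z w : R * R) : dist2 (midpoint z w) w = dist2 z w / 2.
Proof.
  replace (midpoint z w) with (midpoint w z) by (unfold midpoint; f_equal; field).
  rewrite dist2_midpoint_l. apply (f_equal (fun d => d / 2)), dist2_comm.
Qed.

Lemma unif_discrete_eq (X : R * R -> Prop) (s : R) (z w : R * R) :
  unif_discrete X s -> X z -> X w -> dist2 z w < 2 * s -> z = w.
Proof.
  intros [_ Hdisc] Hz Hw Hzw.
  apply (Hdisc (midpoint z w)); unfold in_ball;
    rewrite ?dist2_midpoint_l, ?dist2_midpoint_r; auto; lra.
Qed.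

Lemma dist2_polar (a b u v : R) :
  dist2 (a * cos u, a * sin u) (b * cos v, b * sin v)
  = sqrt ((a - b) ^ 2 + 2 * a * b * (1 - cos (u - v))).
Proof.
  unfold dist2; cbn [fst snd]. f_equal. rewrite cos_minus.
  pose proof (sin2_cos2 u). pose proof (sin2_cos2 v). unfold Rsqr in *. nra.
Qed.

Lemma polar_decomposition (c1 c2 : R) : 0 < sqrt (c1 ^ 2 + c2 ^ 2) ->
  exists phi, c1 = sqrt (c1 ^ 2 + c2 ^ 2) * cos phi /\ c2 = sqrt (c1 ^ 2 + c2 ^ 2) * sin phi.
Proof.
  intros Hr. set (r := sqrt (c1 ^ 2 + c2 ^ 2)) in *.
  assert (Hr2 : r ^ 2 = c1 ^ 2 + c2 ^ 2) by (apply pow2_sqrt; nra).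
  set (u := c1 / r).
  assert (Hu : -1 <= u <= 1).
  { assert (u ^ 2 <= 1); [|nra].
    unfold u. replace ((c1 / r) ^ 2) with (c1 ^ 2 / r ^ 2) by (field; lra).
    apply (Rmult_le_reg_r (r ^ 2)); [nra|]. unfold Rdiv. rewrite Rmult_assoc, Rinv_l by nra. nra. }
  assert (Hsin : sqrt (1 - u²) = Rabs (c2 / r)).
  { rewrite <- sqrt_Rsqr_abs. f_equal. unfold Rsqr, u. field_simplify; [|lra|lra].
    rewrite Hr2. field. nra. }
  destruct (Rle_dec 0 c2) as [Hc2 | Hc2].
  - exists (acos u). rewrite cos_acos, sin_acos, Hsin by exact Hu.
    rewrite Rabs_right by (apply Rle_ge, Rmult_le_pos; [lra | left; apply Rinv_0_lt_compat; lra]).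
    unfold u. split; field; lra.
  - exists (- acos u). rewrite cos_neg, sin_neg, cos_acos, sin_acos, Hsin by exact Hu.
    rewrite Rabs_left by (apply Rdiv_neg_pos; lra).
    unfold u. split; field; lra.
Qed.

Lemma dist2_origin_Xpt (alpha : R) (n : nat) : dist2 (0, 0) (Xpt alpha n) = sqrt (INR n).
Proof.
  unfold dist2, Xpt; cbn [fst snd]. f_equal.
  pose proof (sin2_cos2 (2 * PI * INR n * alpha)) as Htrig. unfold Rsqr in Htrig.
  pose proof (pow2_sqrt (INR n) (pos_INR n)). nra.
Qed.

Lemma Xpt_inj (alpha : R) (n m : nat) : Xpt alpha n = Xpt alpha m -> n = m.
Proof.
  intros Heq. apply INR_eq, sqrt_inj; try apply pos_INR.
  rewrite <- !(dist2_origin_Xpt alpha), Heq. reflexivity.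
Qed.

Lemma dist2_Xpt (alpha : R) (n m : nat) :
  dist2 (Xpt alpha n) (Xpt alpha m)
  = sqrt ((sqrt (INR n) - sqrt (INR m)) ^ 2
          + 2 * sqrt (INR n) * sqrt (INR m) * (1 - cos (2 * PI * (INR n - INR m) * alpha))).
Proof.
  unfold Xpt. rewrite dist2_polar.
  replace (2 * PI * INR n * alpha - 2 * PI * INR m * alpha) with (2 * PI * (INR n - INR m) * alpha) by ring.
  reflexivity.
Qed.

Fixpoint cf_seq_pair (a : nat -> Z) (u0 u1 : Z) (j : nat) : Z * Z :=
  match j with
  | O => (u0, u1)
  | S k => let (x, y) := cf_seq_pair a u0 u1 k in (y, (a k * y + x)%Z)
  end.

Definition cf_seq (a : nat -> Z) (u0 u1 : Z) (j : nat) : Z := fst (cf_seq_pair a u0 u1 j).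

Lemma cf_seq_S (a : nat -> Z) (u0 u1 : Z) (j : nat) :
  cf_seq a u0 u1 (S j) = snd (cf_seq_pair a u0 u1 j).
Proof. unfold cf_seq. simpl. destruct (cf_seq_pair a u0 u1 j). reflexivity. Qed.

Lemma cf_seq_SS (a : nat -> Z) (u0 u1 : Z) (j : nat) :
  cf_seq a u0 u1 (S (S j)) = (a j * cf_seq a u0 u1 (S j) + cf_seq a u0 u1 j)%Z.
Proof. rewrite !cf_seq_S. unfold cf_seq. simpl. destruct (cf_seq_pair a u0 u1 j). reflexivity. Qed.

Lemma cf_seq_cross_sqr (a : nat -> Z) (u0 u1 v0 v1 : Z) (j : nat) :
  let D j := (cf_seq a u0 u1 j * cf_seq a v0 v1 (S j) - cf_seq a v0 v1 j * cf_seq a u0 u1 (S j))%Z in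
  (D j * D j = (u0 * v1 - v0 * u1) * (u0 * v1 - v0 * u1))%Z.
Proof.
  intros D. induction j as [|j IH]; [reflexivity|].
  assert (Hflip : D (S j) = (- D j)%Z) by (unfold D; rewrite !cf_seq_SS; ring).
  rewrite Hflip, <- IH. ring.
Qed.

(* [cf_denom alpha (S j)] and [cf_numer alpha (S j)] are the usual [q_j] and [p_j]. *)
Definition cf_denom (alpha : R) : nat -> Z := cf_seq (partial_quotient alpha) 0 1.
Definition cf_numer (alpha : R) : nat -> Z := cf_seq (partial_quotient alpha) 1 0.

Definition cf_err (alpha : R) (j : nat) : R :=
  IZR (cf_denom alpha j) * alpha - IZR (cf_numer alpha j).

Fixpoint cf_rem_prod (alpha : R) (j : nat) : R :=
  match j with O => 1 | S k => cf_rem_prod alpha k * cf_rem alpha k end.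

Definition cf_nonzero_below (alpha : R) (j : nat) : Prop :=
  forall i, (i < j)%nat -> cf_rem alpha i <> 0.

Section ContinuedFraction.

Variable alpha : R.
Hypothesis Halpha : 0 <= alpha < 1.

Lemma cf_rem_range (i : nat) : 0 <= cf_rem alpha i < 1.
Proof.
  induction i as [|i IH]; [exact Halpha|].
  change (cf_rem alpha (S i)) with (gauss (cf_rem alpha i)). unfold gauss.
  destruct (Req_EM_T (cf_rem alpha i) 0); [lra|].
  pose proof (base_Int_part (/ cf_rem alpha i)). lra.
Qed.

Lemma cf_rem_S (i : nat) : cf_rem alpha i <> 0 ->
  cf_rem alpha (S i) = / cf_rem alpha i - IZR (partial_quotient alpha i).
Proof.
  intros Hi. change (cf_rem alpha (S i)) with (gauss (cf_rem alpha i)). unfold gauss.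
  destruct (Req_EM_T (cf_rem alpha i) 0); [contradiction | reflexivity].
Qed.

Lemma partial_quotient_ge1 (i : nat) : cf_rem alpha i <> 0 -> (1 <= partial_quotient alpha i)%Z.
Proof.
  intros Hi. pose proof (cf_rem_range i).
  assert (1 < / cf_rem alpha i) by (rewrite <- Rinv_1; apply Rinv_lt_contravar; lra).
  pose proof (base_Int_part (/ cf_rem alpha i)) as [_ Hfl].
  apply Z.lt_pred_le, lt_IZR. unfold partial_quotient. rewrite <- Z.sub_1_r, minus_IZR. lra.
Qed.

Lemma partial_quotient_ge0 (i : nat) : (0 <= partial_quotient alpha i)%Z.
Proof.
  destruct (Req_EM_T (cf_rem alpha i) 0) as [Hi | Hi].
  - unfold partial_quotient. rewrite Hi, Rinv_0, <- (Int_part_spec 0 0) by lra. lia.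
  - pose proof (partial_quotient_ge1 i Hi). lia.
Qed.

Lemma cf_rem_prod_ge0 (j : nat) : 0 <= cf_rem_prod alpha j.
Proof.
  induction j as [|j IH]; simpl; [lra|].
  pose proof (cf_rem_range j). nra.
Qed.

Lemma cf_denom_ge0 (j : nat) : (0 <= cf_denom alpha j)%Z.
Proof.
  enough (Hpair : (0 <= cf_denom alpha j /\ 0 <= cf_denom alpha (S j))%Z) by apply Hpair.
  induction j as [|j IH]; [split; cbv; discriminate|].
  split; [apply IH|]. unfold cf_denom. rewrite cf_seq_SS.
  pose proof (partial_quotient_ge0 j). fold (cf_denom alpha). nia.
Qed.

Lemma cf_denom_S_pos (j : nat) : cf_nonzero_below alpha j ->
  (1 <= cf_denom alpha (S j))%Z /\ (cf_denom alpha j <= cf_denom alpha (S j))%Z.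
Proof.
  induction j as [|j IH]; intros Hnz; [split; cbv; discriminate|].
  destruct IH as [H1 H2]; [intros i Hi; apply Hnz; lia|].
  unfold cf_denom. rewrite cf_seq_SS. fold (cf_denom alpha).
  pose proof (partial_quotient_ge1 j (Hnz j ltac:(lia))). pose proof (cf_denom_ge0 j). nia.
Qed.

Lemma cf_rem_prod_SS (j : nat) : cf_rem alpha j <> 0 ->
  cf_rem_prod alpha (S (S j)) = cf_rem_prod alpha j - IZR (partial_quotient alpha j) * cf_rem_prod alpha (S j).
Proof. intros Hj. cbn [cf_rem_prod]. rewrite (cf_rem_S j Hj). field. exact Hj. Qed.

Lemma cf_err_S (j : nat) : cf_nonzero_below alpha j ->
  cf_err alpha (S j) = (-1) ^ j * cf_rem_prod alpha (S j).
Proof.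
  enough (Hpair : cf_nonzero_below alpha j ->
            cf_err alpha j = (-1) ^ S j * cf_rem_prod alpha j /\
            cf_err alpha (S j) = (-1) ^ j * cf_rem_prod alpha (S j)) by (intros; apply Hpair; auto).
  induction j as [|j IH]; intros Hnz.
  - unfold cf_err, cf_denom, cf_numer, cf_seq, cf_rem. simpl. split; ring.
  - destruct IH as [H0 H1]; [intros i Hi; apply Hnz; lia|].
    split; [rewrite H1; simpl; ring|].
    assert (Herr : cf_err alpha (S (S j))
                   = IZR (partial_quotient alpha j) * cf_err alpha (S j) + cf_err alpha j).
    { unfold cf_err, cf_denom, cf_numer. rewrite !cf_seq_SS, !plus_IZR, !mult_IZR. ring. }
    rewrite Herr, H0, H1, cf_rem_prod_SS by (apply Hnz; lia). simpl. ring.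
Qed.

Lemma Rabs_cf_err_S (j : nat) : cf_nonzero_below alpha j ->
  Rabs (cf_err alpha (S j)) = cf_rem_prod alpha (S j).
Proof.
  intros Hnz. rewrite cf_err_S, Rabs_mult, pow_1_abs, Rmult_1_l by exact Hnz.
  apply Rabs_right, Rle_ge, cf_rem_prod_ge0.
Qed.

Lemma cf_wronskian (j : nat) : cf_nonzero_below alpha j ->
  IZR (cf_denom alpha (S j)) * cf_rem_prod alpha j + IZR (cf_denom alpha j) * cf_rem_prod alpha (S j) = 1.
Proof.
  induction j as [|j IH]; intros Hnz; [unfold cf_denom, cf_seq; simpl; ring|].
  unfold cf_denom at 1. rewrite cf_seq_SS, cf_rem_prod_SS by (apply Hnz; lia). fold (cf_denom alpha).
  rewrite plus_IZR, mult_IZR, <- IH by (intros i Hi; apply Hnz; lia). ring.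
Qed.

Lemma cf_denom_mul_err_le (k : nat) : cf_nonzero_below alpha (S k) ->
  IZR (cf_denom alpha (S (S k))) * Rabs (cf_err alpha (S k)) <= 1.
Proof.
  intros Hnz. rewrite Rabs_cf_err_S by (intros i Hi; apply Hnz; lia).
  pose proof (cf_wronskian (S k) Hnz).
  pose proof (cf_rem_prod_ge0 (S (S k))). pose proof (IZR_le _ _ (cf_denom_ge0 (S k))). nra.
Qed.

Lemma cf_infinite_of_bad_approx : bad_approx alpha -> forall i, cf_rem alpha i <> 0.
Proof.
  intros [C [HC Hbad]].
  enough (Hall : forall j, cf_nonzero_below alpha j) by (intros i; apply (Hall (S i)); lia).
  induction j as [|j IH]; [intros i Hi; lia|].
  intros i Hi Hzero. destruct (Nat.eq_dec i j) as [-> | Hne]; [|apply (IH i); [lia | exact Hzero]].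
  pose proof (Rabs_cf_err_S j IH) as Herr. cbn [cf_rem_prod] in Herr. rewrite Hzero, Rmult_0_r in Herr.
  destruct (cf_denom_S_pos j IH) as [Hq _].
  specialize (Hbad (cf_numer alpha (S j)) (Z.to_nat (cf_denom alpha (S j))) ltac:(lia)).
  rewrite INR_Z_to_nat in Hbad by lia. fold (cf_err alpha (S j)) in Hbad.
  rewrite Herr, Rmult_0_r in Hbad. lra.
Qed.

(* In the usual indexing: [a_(k+1) C <= a_(k+1) q_k |q_k alpha - p_k| <= q_(k+1) |q_k alpha - p_k| <= 1]. *)
Lemma partial_quotient_le_inv (C : R) : bad_approx_const alpha C ->
  forall k, IZR (partial_quotient alpha k) <= / C.
Proof.
  intros Hbc k. pose proof Hbc as [HC Hbad].
  assert (Hnz : forall j, cf_nonzero_below alpha j)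
    by (intros j i _; exact (cf_infinite_of_bad_approx (ex_intro _ C Hbc) i)).
  destruct (cf_denom_S_pos k (Hnz k)) as [Hq _].
  specialize (Hbad (cf_numer alpha (S k)) (Z.to_nat (cf_denom alpha (S k))) ltac:(lia)).
  rewrite INR_Z_to_nat in Hbad by lia. fold (cf_err alpha (S k)) in Hbad.
  pose proof (cf_denom_mul_err_le k (Hnz (S k))) as Hle.
  unfold cf_denom at 1 in Hle. rewrite cf_seq_SS, plus_IZR, mult_IZR in Hle. fold (cf_denom alpha) in Hle.
  pose proof (IZR_le _ _ (cf_denom_ge0 k)). pose proof (Rabs_pos (cf_err alpha (S k))).
  pose proof (IZR_le _ _ (partial_quotient_ge0 k)).
  apply (Rmult_le_reg_r C); [exact HC|]. rewrite Rinv_l by lra. nra.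
Qed.

Lemma cf_denom_unbounded (j : nat) : (forall i, cf_rem alpha i <> 0) ->
  (Z.of_nat j + 1 <= cf_denom alpha (S (S j)))%Z.
Proof.
  intros Hnz. induction j as [|j IH]; unfold cf_denom; rewrite cf_seq_SS; fold (cf_denom alpha).
  - pose proof (partial_quotient_ge1 0 (Hnz 0%nat)).
    change (cf_denom alpha 1) with 1%Z. change (cf_denom alpha 0) with 0%Z. lia.
  - pose proof (partial_quotient_ge1 (S j) (Hnz (S j))).
    pose proof (cf_denom_S_pos j (fun i _ => Hnz i)) as [H1 _]. nia.
Qed.

Lemma cf_denom_bracket (L : R) : (forall i, cf_rem alpha i <> 0) -> 1 <= L ->
  exists k, IZR (cf_denom alpha (S k)) <= L < IZR (cf_denom alpha (S (S k))).
Proof.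
  intros Hnz HL.
  assert (Hind : forall j, L < IZR (cf_denom alpha (S (S j))) ->
            exists k, IZR (cf_denom alpha (S k)) <= L < IZR (cf_denom alpha (S (S k)))).
  { induction j as [|j IH]; intros Hj.
    - exists 0%nat. change (cf_denom alpha 1) with 1%Z. lra.
    - destruct (Rlt_dec L (IZR (cf_denom alpha (S (S j))))) as [Hlt | Hge].
      + exact (IH Hlt).
      + exists (S j). lra. }
  apply (Hind (Z.to_nat (up L))).
  pose proof (archimed L) as [Hup _].
  pose proof (IZR_le _ _ (cf_denom_unbounded (Z.to_nat (up L)) Hnz)) as Hq.
  rewrite plus_IZR, <- INR_IZR_INZ, INR_Z_to_nat in Hq by (apply le_IZR; lra). lra.
Qed.

Lemma cf_bezout (k : nat) :
  exists u v : Z, (u * cf_numer alpha (S k) + v * cf_denom alpha (S k) = 1)%Z.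
Proof.
  pose proof (cf_seq_cross_sqr (partial_quotient alpha) 0 1 1 0 k) as Hdet. cbv zeta in Hdet.
  fold (cf_denom alpha) (cf_numer alpha) in Hdet.
  set (D := (cf_denom alpha k * cf_numer alpha (S k) - cf_numer alpha k * cf_denom alpha (S k))%Z) in Hdet.
  exists (D * cf_denom alpha k)%Z, (- (D * cf_numer alpha k))%Z.
  transitivity (D * D)%Z; [unfold D; ring | exact Hdet].
Qed.

End ContinuedFraction.

(* Take [m = u j mod q] with [j] the integer nearest to [q gamma]: then [m p = j (mod q)], so
   [m alpha] lies within [1/(2q)] of [gamma] up to the drift [m (q alpha - p) / q]. *)
Lemma inhomogeneous_approx (alpha gamma : R) (p q u v : Z) :
  (1 <= q)%Z -> (u * p + v * q = 1)%Z ->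
  exists m t : Z, (0 <= m < q)%Z /\
    Rabs (IZR m * alpha - gamma - IZR t) <= / (2 * IZR q) + Rabs (IZR q * alpha - IZR p).
Proof.
  intros Hq Hbez.
  set (Q := IZR q). assert (HQ : 1 <= Q) by (apply IZR_le; exact Hq).
  set (th := Q * alpha - IZR p).
  set (j := Int_part (Q * gamma + / 2)).
  pose proof (base_Int_part (Q * gamma + / 2)) as [Hj1 Hj2]. fold j in Hj1, Hj2.
  set (w := ((u * j) / q)%Z). set (m := ((u * j) mod q)%Z).
  assert (Hm : m = (u * j - q * w)%Z) by (pose proof (Z.div_mod (u * j) q ltac:(lia)); lia).
  assert (Hmq : (0 <= m < q)%Z) by (apply Z.mod_pos_bound; lia).
  set (t := (- (v * j + w * p))%Z).
  assert (Hmp : (m * p = j + t * q)%Z).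
  { rewrite Hm. unfold t.
    transitivity (j * (u * p + v * q) - q * (v * j + w * p))%Z; [ring|]. rewrite Hbez. ring. }
  exists m, t. split; [exact Hmq|].
  assert (HmQ : 0 <= IZR m <= Q) by (split; apply IZR_le; lia).
  assert (Hsplit : IZR m * alpha - gamma - IZR t = (IZR j - Q * gamma) / Q + IZR m * th / Q).
  { apply (Rmult_eq_reg_r Q); [|lra].
    assert (HmpR : IZR m * IZR p = IZR j + IZR t * Q) by (unfold Q; rewrite <- !mult_IZR, <- plus_IZR, Hmp; reflexivity).
    unfold th. field_simplify; [|lra]. rewrite HmpR. ring. }
  rewrite Hsplit.
  apply Rle_trans with (Rabs ((IZR j - Q * gamma) / Q) + Rabs (IZR m * th / Q)); [apply Rabs_triang|].
  apply Rplus_le_compat; unfold Rdiv; rewrite !Rabs_mult, (Rabs_right (/ Q))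
    by (apply Rle_ge, Rlt_le, Rinv_0_lt_compat; lra).
  - replace (/ (2 * Q)) with (/ 2 * / Q) by (field; lra).
    apply Rmult_le_compat_r; [apply Rlt_le, Rinv_0_lt_compat; lra|]. apply Rabs_le. lra.
  - rewrite (Rabs_right (IZR m)) by lra. pose proof (Rabs_pos th).
    apply (Rmult_le_reg_r Q); [lra|]. rewrite Rmult_assoc, Rinv_l by lra. fold th. nra.
Qed.

Lemma approx_of_pq_bounded (alpha : R) (B : Z) (L gamma : R) :
  0 <= alpha < 1 -> (forall i, cf_rem alpha i <> 0) ->
  (1 <= B)%Z -> (forall k, (partial_quotient alpha k <= B)%Z) -> 1 <= L ->
  exists (m : nat) (t : Z), INR m + 1 <= L /\ Rabs (INR m * alpha - gamma - IZR t) * L < IZR B + 1.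
Proof.
  intros Ha Hnz HB1 HB HL.
  destruct (cf_denom_bracket alpha Ha L Hnz HL) as [k [HkL HLk]].
  destruct (cf_bezout alpha k) as [u [v Hbez]].
  destruct (cf_denom_S_pos alpha Ha k (fun i _ => Hnz i)) as [Hq1 Hqk].
  destruct (inhomogeneous_approx alpha gamma _ _ u v Hq1 Hbez) as [m [t [Hm He]]].
  fold (cf_err alpha (S k)) in He.
  exists (Z.to_nat m), t. rewrite INR_Z_to_nat by lia.
  set (q := cf_denom alpha (S k)) in *. set (q' := cf_denom alpha (S (S k))) in *.
  assert (Hqq : (q' <= (B + 1) * q)%Z).
  { unfold q', q, cf_denom. rewrite cf_seq_SS. fold (cf_denom alpha).
    pose proof (HB k). pose proof (partial_quotient_ge0 alpha Ha k). nia. }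
  apply IZR_le in Hqq. rewrite mult_IZR, plus_IZR in Hqq.
  pose proof (cf_denom_mul_err_le alpha Ha k (fun i _ => Hnz i)) as Herr. fold q' in Herr.
  assert (HqR : 1 <= IZR q) by (apply IZR_le; exact Hq1).
  assert (HBR : 1 <= IZR B) by (apply IZR_le; exact HB1).
  split; [rewrite <- plus_IZR; apply Rle_trans with (IZR q); [apply IZR_le; lia | exact HkL]|].
  set (e := IZR m * alpha - gamma - IZR t) in *.
  set (th := Rabs (cf_err alpha (S k))) in *. pose proof (Rabs_pos (cf_err alpha (S k))).
  assert (Hhalf : / (2 * IZR q) * L < (IZR B + 1) / 2).
  { apply (Rmult_lt_reg_r (2 * IZR q)); [lra|].
    replace (/ (2 * IZR q) * L * (2 * IZR q)) with L by (field; lra). lra. }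
  assert (Rabs e * L <= (/ (2 * IZR q) + th) * L) by (apply Rmult_le_compat_r; lra).
  nra.
Qed.

Lemma sqr_sqrt_sub_le (n rho h : R) :
  0 <= h <= rho -> (rho - h) ^ 2 <= n <= (rho + h) ^ 2 -> (sqrt n - rho) ^ 2 <= h ^ 2.
Proof.
  intros Hh Hn.
  assert (Hs2 : sqrt n ^ 2 = n) by (apply pow2_sqrt; nra).
  pose proof (sqrt_pos n).
  assert (rho - h <= sqrt n) by nra. assert (sqrt n <= rho + h) by nra. nra.
Qed.

(* Points with [sqrt n] within [h] of [rho] have indices [N + m], [m < L ~ 4 rho h]; the
   approximation lemma puts some [(N + m) alpha] within [(B + 1) / L] of [phi / (2 pi)] mod 1. *)
Lemma Xpt_near_far_point (alpha : R) (B : Z) (rho phi : R) :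
  0 <= alpha < 1 -> (forall i, cf_rem alpha i <> 0) ->
  (1 <= B)%Z -> (forall k, (partial_quotient alpha k <= B)%Z) ->
  2 * sqrt (IZR B + 1) <= rho ->
  exists n, (1 <= n)%nat /\ dist2 (rho * cos phi, rho * sin phi) (Xpt alpha n) < 6 * sqrt (IZR B).
Proof.
  intros Ha Hnz HB1 HB Hrho.
  assert (HBR : 1 <= IZR B) by (apply IZR_le; exact HB1).
  set (b := IZR B + 1) in *. set (h := 2 * sqrt b) in *.
  assert (Hh2 : h ^ 2 = 4 * b) by (unfold h; rewrite Rpow_mult_distr, pow2_sqrt by (unfold b; lra); ring).
  assert (Hh0 : 0 <= h) by (unfold h; pose proof (sqrt_pos b); lra).
  assert (Hb : 2 <= b) by (unfold b; lra).
  assert (Hrh : 8 <= rho * h) by nra.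
  set (L := 4 * rho * h - 1).
  assert (HL : 2 * rho * h <= L) by (unfold L; nra).
  destruct (exists_nat_above ((rho - h) ^ 2) (pow2_ge_0 _)) as [N [HN0 HN]].
  destruct (approx_of_pq_bounded alpha B L (phi / (2 * PI) - INR N * alpha) Ha Hnz HB1 HB ltac:(nra))
    as [m [t [HmL He]]].
  exists (N + m)%nat. split; [lia|].
  unfold Xpt. rewrite dist2_polar.
  set (e := INR m * alpha - (phi / (2 * PI) - INR N * alpha) - IZR t) in *.
  replace (phi - 2 * PI * INR (N + m) * alpha) with (- (2 * PI * e + 2 * PI * IZR t))
    by (unfold e; rewrite plus_INR; field; apply PI_neq0).
  rewrite cos_neg, cos_add_2PI_IZR.
  set (s := sqrt (INR (N + m))).
  assert (Hgap : (s - rho) ^ 2 <= 4 * b).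
  { rewrite <- Hh2. apply sqr_sqrt_sub_le; [lra|]. rewrite plus_INR. pose proof (pos_INR m). unfold L in HmL. split; nra. }
  assert (Hs : s <= 2 * rho) by (pose proof (sqrt_pos (INR (N + m))); nra).
  pose proof (one_sub_cos_2PI_le e). pose proof (COS_bound (2 * PI * e)).
  assert (Hangle : rho ^ 2 * e ^ 2 * (16 * b) < b ^ 2).
  { replace (rho ^ 2 * e ^ 2 * (16 * b)) with ((Rabs e * (2 * rho * h)) ^ 2)
      by (rewrite Rpow_mult_distr, pow2_abs;
          replace ((2 * rho * h) ^ 2) with (4 * rho ^ 2 * h ^ 2) by ring; rewrite Hh2; ring).
    pose proof (Rabs_pos e).
    assert (0 <= Rabs e * (2 * rho * h) <= Rabs e * L) by (split; nra).
    unfold b. nra. }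
  assert (Hterm : 2 * rho * s * (1 - cos (2 * PI * e)) <= 4 * rho ^ 2 * (32 * e ^ 2)).
  { pose proof (sqrt_pos (INR (N + m))). apply Rmult_le_compat; nra. }
  apply sqrt_lt_of_lt_sqr; [apply Rmult_lt_0_compat; [lra | apply sqrt_lt_R0; lra]|].
  rewrite Rpow_mult_distr, pow2_sqrt by lra. unfold b in *. nra.
Qed.

Lemma X_rel_dense_of_pq_bounded (alpha : R) (B : Z) : 0 <= alpha < 1 -> (0 < B)%Z ->
  bad_approx alpha -> pq_bounded alpha B -> rel_dense (inX alpha) (6 * sqrt (IZR B)).
Proof.
  intros Ha HB0 Hbad Hpq.
  pose proof (cf_infinite_of_bad_approx alpha Ha Hbad) as Hnz.
  assert (HB : forall k, (partial_quotient alpha k <= B)%Z) by (intros k; apply Hpq, Hnz).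
  assert (HBR : 1 <= IZR B) by (apply IZR_le; lia).
  assert (HsB : 1 <= sqrt (IZR B)) by (rewrite <- sqrt_1; apply sqrt_le_1_alt; exact HBR).
  split; [lra|]. intros [c1 c2].
  set (rho := sqrt (c1 ^ 2 + c2 ^ 2)).
  destruct (Rlt_dec rho (2 * sqrt (IZR B + 1))) as [Hnear | Hfar].
  - exists (Xpt alpha 1). split; [|exists 1%nat; split; auto].
    unfold in_ball. pose proof (dist2_triangle (0, 0) (c1, c2) (Xpt alpha 1)) as Htri.
    rewrite dist2_origin_Xpt in Htri. change (INR 1) with 1 in Htri. rewrite sqrt_1 in Htri.
    replace (dist2 (0, 0) (c1, c2)) with rho in Htri by (unfold dist2, rho; simpl; f_equal; ring).
    assert (Hsqrt : sqrt (IZR B + 1) <= 2 * sqrt (IZR B)).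
    { rewrite <- (sqrt_pow2 (2 * sqrt (IZR B))) by lra. apply sqrt_le_1_alt.
      rewrite Rpow_mult_distr, pow2_sqrt; lra. }
    lra.
  - destruct (polar_decomposition c1 c2) as [phi [Hc1 Hc2]].
    { fold rho. pose proof (sqrt_lt_R0 (IZR B + 1) ltac:(lra)). lra. }
    fold rho in Hc1, Hc2. rewrite Hc1, Hc2.
    destruct (Xpt_near_far_point alpha B rho phi Ha Hnz ltac:(lia) HB ltac:(lra)) as [n [Hn Hd]].
    exists (Xpt alpha n). split; [exact Hd | exists n; split; auto].
Qed.

Lemma dist_int_shifted_ge (alpha c : R) (n q : nat) (p : Z) :
  (1 <= q)%nat -> Rabs ((INR n - c) * (INR q * alpha - IZR p)) <= / 16 ->
  forall l : Z,
    7 / (16 * INR q) <= Rabs (INR n * alpha - (/ 2 + c * (INR q * alpha - IZR p)) / INR q - IZR l).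
Proof.
  intros Hq Hsmall l.
  set (Q := INR q) in *. assert (HQ : 1 <= Q) by (apply (le_INR 1); exact Hq).
  set (th := Q * alpha - IZR p) in *.
  set (M := (Z.of_nat n * p - l * Z.of_nat q)%Z).
  assert (Hsplit : INR n * alpha - (/ 2 + c * th) / Q - IZR l
                   = ((IZR M - / 2) + (INR n - c) * th) / Q).
  { unfold M, th. rewrite minus_IZR, !mult_IZR, <- !INR_IZR_INZ. fold Q. field. lra. }
  assert (Hhalf : / 2 <= Rabs (IZR M - / 2)).
  { destruct (Z_le_gt_dec M 0) as [HM | HM].
    - apply IZR_le in HM. rewrite Rabs_left by lra. lra.
    - assert (1 <= IZR M) by (apply IZR_le; lia). rewrite Rabs_right by lra. lra. }
  rewrite Hsplit. unfold Rdiv. rewrite Rabs_mult, (Rabs_right (/ Q))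
    by (apply Rle_ge, Rlt_le, Rinv_0_lt_compat; lra).
  replace (7 * / (16 * Q)) with (7 / 16 * / Q) by (field; lra).
  apply Rmult_le_compat_r; [apply Rlt_le, Rinv_0_lt_compat; lra|].
  pose proof (Rabs_triang_inv (IZR M - / 2) (- ((INR n - c) * th))) as Htri.
  rewrite Rabs_Ropp in Htri.
  replace (IZR M - / 2 - - ((INR n - c) * th)) with (IZR M - / 2 + (INR n - c) * th) in Htri by ring.
  lra.
Qed.

Lemma Rabs_sqr_sub_le (s rho r : R) :
  Rabs (s - rho) <= r -> 0 <= s -> 2 * r <= rho -> Rabs (s ^ 2 - rho ^ 2) <= 3 * rho * r.
Proof.
  intros Hsr Hs Hrho.
  replace (s ^ 2 - rho ^ 2) with ((s - rho) * (s + rho)) by ring.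
  pose proof (Rabs_pos (s - rho)). pose proof (Rle_abs (s - rho)).
  rewrite Rabs_mult, (Rabs_right (s + rho)) by lra.
  replace (3 * rho * r) with (r * (3 * rho)) by ring.
  apply Rmult_le_compat; lra.
Qed.

(* The centre lies at radius [rho = 2 q r] and angle [gamma]: every point with [sqrt n] close to
   [rho] has [n alpha] near [n p / q], and [gamma] is shifted by [1 / (2q)] from all of these. *)
Lemma X_misses_ball_of_good_approx (alpha r : R) (q : nat) (p : Z) :
  0 < r -> (1 <= q)%nat -> INR q * Rabs (INR q * alpha - IZR p) < / (96 * r ^ 2) ->
  exists c, forall n, ~ in_ball c r (Xpt alpha n).
Proof.
  intros Hr Hq Hsmall.
  set (Q := INR q) in *. assert (HQ : 1 <= Q) by (apply (le_INR 1); exact Hq).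
  set (th := Q * alpha - IZR p) in *.
  set (rho := 2 * Q * r).
  set (gamma := (/ 2 + rho ^ 2 * th) / Q).
  exists (rho * cos (2 * PI * gamma), rho * sin (2 * PI * gamma)).
  intros n Hin. unfold in_ball, Xpt in Hin. rewrite dist2_polar in Hin.
  revert Hin. apply Rle_not_lt, le_sqrt_of_sqr_le; [lra|].
  set (s := sqrt (INR n)). pose proof (sqrt_pos (INR n)) as Hs0. fold s in Hs0.
  set (w := INR n * alpha - gamma).
  replace (2 * PI * gamma - 2 * PI * INR n * alpha) with (- (2 * PI * w)) by (unfold w; ring).
  rewrite cos_neg. pose proof (COS_bound (2 * PI * w)).
  assert (Hrho : 2 * r <= rho) by (unfold rho; nra).
  destruct (Rle_dec r (Rabs (rho - s))) as [Hfar | Hnear].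
  - assert (r ^ 2 <= (rho - s) ^ 2) by (rewrite <- (pow2_abs (rho - s)); nra).
    assert (0 <= 2 * rho * s * (1 - cos (2 * PI * w))) by (apply Rmult_le_pos; nra).
    lra.
  - apply Rnot_le_lt, Rabs_def2 in Hnear.
    assert (Hn : Rabs (INR n - rho ^ 2) <= 6 * Q * r ^ 2).
    { rewrite <- (pow2_sqrt (INR n) (pos_INR n)). fold s.
      replace (6 * Q * r ^ 2) with (3 * rho * r) by (unfold rho; ring).
      apply Rabs_sqr_sub_le; [apply Rabs_le; lra | lra | lra]. }
    assert (Hprod : Rabs ((INR n - rho ^ 2) * th) <= / 16).
    { rewrite Rabs_mult. pose proof (Rabs_pos th). pose proof (Rabs_pos (INR n - rho ^ 2)).
      assert (Q * Rabs th * (96 * r ^ 2) < 1).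
      { apply (Rmult_lt_compat_r (96 * r ^ 2)) in Hsmall; [|nra].
        rewrite Rinv_l in Hsmall by nra. exact Hsmall. }
      nra. }
    pose proof (dist_int_shifted_ge alpha (rho ^ 2) n q p Hq Hprod) as Hdist.
    pose proof (one_sub_cos_2PI_ge w (7 / (16 * Q))
                  ltac:(apply Rlt_le, Rdiv_lt_0_compat; lra) Hdist) as Hcos.
    assert (Hangle : r ^ 2 * (392 / 256) <= 2 * rho * s * (1 - cos (2 * PI * w))).
    { replace (r ^ 2 * (392 / 256)) with (2 * rho * (Q * r) * (2 * (7 / (16 * Q)) ^ 2))
        by (unfold rho; field; lra).
      assert (HQr : 0 < Q * r) by nra. assert (HQs : Q * r <= s) by (unfold rho in *; nra).
      apply Rmult_le_compat; [nra | nra | nra | exact Hcos]. }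
    pose proof (pow2_ge_0 (rho - s)). nra.
Qed.

Lemma bad_approx_const_of_rel_dense (alpha r : R) :
  rel_dense (inX alpha) r -> bad_approx_const alpha (/ (96 * r ^ 2)).
Proof.
  intros [Hr Hdense]. split; [apply Rinv_0_lt_compat; nra|].
  intros p q Hq. apply Rnot_lt_ge. intros Hsmall.
  destruct (X_misses_ball_of_good_approx alpha r q p Hr Hq Hsmall) as [c Hc].
  destruct (Hdense c) as [z [Hz [n [_ ->]]]]. exact (Hc n Hz).
Qed.

Lemma pq_bounded_of_rel_dense (alpha r : R) : 0 <= alpha < 1 ->
  rel_dense (inX alpha) r -> pq_bounded alpha (Int_part (96 * r ^ 2)).
Proof.
  intros Ha Hdense k _. apply IZR_le_Int_part.
  rewrite <- (Rinv_inv (96 * r ^ 2)).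
  exact (partial_quotient_le_inv alpha Ha _ (bad_approx_const_of_rel_dense alpha r Hdense) k).
Qed.

Lemma gap_angle_lower_bound (x y C c : R) :
  1 <= x < y -> 0 < C < 1 -> 2 * (C / (y ^ 2 - x ^ 2)) ^ 2 <= c ->
  C <= (y - x) ^ 2 + 2 * y * x * c.
Proof.
  intros Hxy HC Hc.
  assert (Hk : 0 < y ^ 2 - x ^ 2) by nra.
  set (u := C / (y ^ 2 - x ^ 2)) in Hc.
  assert (HCu : C = u * (y - x) * (y + x)) by (unfold u; field; lra).
  assert (Hxy0 : 0 <= x * y) by nra.
  assert (Hangle : 4 * (x * y * u ^ 2) <= 2 * y * x * c) by nra.
  destruct (Rle_dec 1 (y - x)) as [Hfar | Hnear]; [nra|].
  assert (Hsum : (y + x) ^ 2 <= 9 * (x * y)) by nra.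
  assert (HC2 : C ^ 2 <= (u * (y - x)) ^ 2 * (9 * (x * y))).
  { rewrite HCu. replace ((u * (y - x) * (y + x)) ^ 2) with ((u * (y - x)) ^ 2 * (y + x) ^ 2) by ring.
    apply Rmult_le_compat_l; [apply pow2_ge_0 | exact Hsum]. }
  set (d2 := (y - x) ^ 2) in *. set (P := x * y * u ^ 2) in *.
  assert (Hd2 : 0 < d2) by (unfold d2; nra).
  replace ((u * (y - x)) ^ 2 * (9 * (x * y))) with (9 * d2 * P) in HC2 by (unfold d2, P; ring).
  (* AM-GM: [C <= 3/4 d2 + 3 P] since [C^2 <= 9 d2 P]. *)
  assert (Hamgm : 12 * C * d2 <= 9 * d2 ^ 2 + 36 * d2 * P) by (pose proof (pow2_ge_0 (3 * d2 - 2 * C)); nra).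
  assert (C <= 3 / 4 * d2 + 3 * P) by (apply (Rmult_le_reg_r (12 * d2)); nra).
  assert (0 <= P) by (unfold P; nra).
  lra.
Qed.

Lemma Xpt_dist_ge (alpha C : R) (n m : nat) : bad_approx_const alpha C -> C < 1 ->
  (1 <= m)%nat -> (m < n)%nat -> sqrt C <= dist2 (Xpt alpha n) (Xpt alpha m).
Proof.
  intros [HC Hbad] HC1 Hm Hmn.
  rewrite dist2_Xpt. apply sqrt_le_1_alt.
  set (k := (n - m)%nat).
  assert (Hk : INR n - INR m = INR k) by (unfold k; rewrite minus_INR by lia; ring).
  assert (Hk1 : 1 <= INR k) by (apply (le_INR 1); unfold k; lia).
  assert (Hdist : forall l : Z, C / INR k <= Rabs (INR k * alpha - IZR l)).
  { intros l. specialize (Hbad l k ltac:(unfold k; lia)).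
    apply (Rmult_le_reg_l (INR k)); [lra|]. unfold Rdiv.
    rewrite <- Rmult_assoc, Rinv_r_simpl_m by lra. lra. }
  pose proof (one_sub_cos_2PI_ge (INR k * alpha) (C / INR k)
                ltac:(apply Rlt_le, Rdiv_lt_0_compat; lra) Hdist) as Hcos.
  rewrite Hk. replace (2 * PI * INR k * alpha) with (2 * PI * (INR k * alpha)) by ring.
  replace (C / INR k) with (C / (sqrt (INR n) ^ 2 - sqrt (INR m) ^ 2)) in Hcos
    by (rewrite !pow2_sqrt by apply pos_INR; rewrite Hk; reflexivity).
  apply gap_angle_lower_bound; [split | split; lra | exact Hcos].
  - rewrite <- sqrt_1. apply sqrt_le_1_alt, (le_INR 1), Hm.
  - apply sqrt_lt_1_alt. split; [apply pos_INR | apply lt_INR, Hmn].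
Qed.

Lemma X_unif_discrete_of_bad_approx_const (alpha C : R) : 0 <= alpha < 1 ->
  bad_approx_const alpha C -> unif_discrete (inX alpha) (sqrt C / 2).
Proof.
  intros Ha Hbc. pose proof Hbc as [HC Hbad].
  assert (HC1 : C < 1).
  { specialize (Hbad 0%Z 1%nat (le_n 1)). simpl INR in Hbad. rewrite Rabs_right in Hbad; lra. }
  split; [pose proof (sqrt_lt_R0 C HC); lra|].
  intros x z w Hz [n [Hn ->]] Hw [m [Hm ->]]. unfold in_ball in *.
  pose proof (dist2_triangle x (Xpt alpha n) (Xpt alpha m)) as Htri.
  destruct (lt_eq_lt_dec n m) as [[Hlt | ->] | Hgt]; [| reflexivity |].
  - pose proof (Xpt_dist_ge alpha C m n Hbc HC1 Hn Hlt). rewrite dist2_comm in Htri. lra.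
  - pose proof (Xpt_dist_ge alpha C n m Hbc HC1 Hm Hgt). lra.
Qed.

Lemma unif_discrete_X_lt_2 (alpha s : R) : unif_discrete (inX alpha) s -> s < 2.
Proof.
  intros Hdisc. destruct (Rlt_dec s 2) as [Hs | Hs]; [exact Hs | exfalso].
  assert (Hsqrt2 : sqrt 2 < 2) by (apply sqrt_lt_of_lt_sqr; lra).
  assert (Heq : Xpt alpha 2 = Xpt alpha 1).
  { apply (unif_discrete_eq (inX alpha) s); [exact Hdisc | exists 2%nat; auto | exists 1%nat; auto |].
    pose proof (dist2_triangle (0, 0) (Xpt alpha 2) (Xpt alpha 1)) as Htri.
    rewrite !dist2_origin_Xpt in Htri. change (INR 2) with 2 in Htri. change (INR 1) with 1 in Htri.
    rewrite sqrt_1 in Htri. lra. }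
  apply Xpt_inj in Heq. discriminate.
Qed.

Lemma sqr_sub_lt_of_sqr_diff (x y s : R) :
  0 <= x <= y -> 0 < s -> (y ^ 2 - x ^ 2) ^ 2 < 2 * s ^ 2 * x ^ 2 -> (y - x) ^ 2 < s ^ 2 / 2.
Proof.
  intros Hxy Hs Hdiff.
  assert (Hx : 0 < x).
  { pose proof (pow2_ge_0 (y ^ 2 - x ^ 2)). destruct (Req_dec x 0) as [Hx0 | Hx0]; [|lra].
    replace (2 * s ^ 2 * x ^ 2) with 0 in Hdiff by (rewrite Hx0; ring). lra. }
  assert (Hfac : (y - x) ^ 2 * (y + x) ^ 2 < s ^ 2 / 2 * (y + x) ^ 2).
  { replace ((y - x) ^ 2 * (y + x) ^ 2) with ((y ^ 2 - x ^ 2) ^ 2) by ring.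
    assert (s ^ 2 * (4 * x ^ 2) <= s ^ 2 * (y + x) ^ 2) by (apply Rmult_le_compat_l; nra). lra. }
  apply (Rmult_lt_reg_r ((y + x) ^ 2)); [nra | exact Hfac].
Qed.

Lemma two_sqrt_mul_one_sub_cos_le (m q : nat) (th : R) :
  2 * sqrt (INR (m + q)) * sqrt (INR m) * (1 - cos (2 * PI * th)) <= 32 * (2 * INR m + INR q) * th ^ 2.
Proof.
  pose proof (one_sub_cos_2PI_le th). pose proof (COS_bound (2 * PI * th)).
  assert (Hx2 : sqrt (INR m) ^ 2 = INR m) by apply pow2_sqrt, pos_INR.
  assert (Hy2 : sqrt (INR (m + q)) ^ 2 = INR m + INR q)
    by (rewrite pow2_sqrt, plus_INR by apply pos_INR; reflexivity).
  pose proof (sqrt_pos (INR m)). pose proof (sqrt_pos (INR (m + q))).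
  pose proof (pow2_ge_0 (sqrt (INR (m + q)) - sqrt (INR m))).
  apply Rle_trans with ((2 * INR m + INR q) * (32 * th ^ 2)); [apply Rmult_le_compat; nra | lra].
Qed.

(* Two points [m] and [m + q] with [m ~ q^2 / (2 s^2)]: their radii differ by about [q / (2 sqrt m)]
   and their angles by [2 pi |q alpha - p|]. *)
Lemma Xpt_close_of_good_approx (alpha s : R) (q : nat) (p : Z) :
  0 < s < 2 -> (1 <= q)%nat -> INR q * Rabs (INR q * alpha - IZR p) < s ^ 2 / 53 ->
  exists m, (1 <= m)%nat /\ dist2 (Xpt alpha (m + q)) (Xpt alpha m) < 2 * s.
Proof.
  intros Hs Hq Hsmall.
  set (Q := INR q) in *. assert (HQ : 1 <= Q) by (apply (le_INR 1); exact Hq).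
  set (th := Q * alpha - IZR p) in *.
  set (T := Q ^ 2 / (2 * s ^ 2)).
  assert (HT : 0 < T) by (unfold T; apply Rdiv_lt_0_compat; nra).
  destruct (exists_nat_above T (Rlt_le _ _ HT)) as [m [Hm1 Hm]].
  exists m. split; [exact Hm1|].
  rewrite dist2_Xpt.
  replace (2 * PI * (INR (m + q) - INR m) * alpha) with (2 * PI * th + 2 * PI * IZR p)
    by (unfold th, Q; rewrite plus_INR; ring).
  rewrite cos_add_2PI_IZR.
  pose proof (two_sqrt_mul_one_sub_cos_le m q th) as Hangular. fold Q in Hangular.
  set (x := sqrt (INR m)) in *. set (y := sqrt (INR (m + q))) in *.
  assert (Hradial : (y - x) ^ 2 < s ^ 2 / 2).
  { assert (Hx2 : x ^ 2 = INR m) by apply pow2_sqrt, pos_INR.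
    assert (Hy2 : y ^ 2 = INR m + Q) by (unfold y; rewrite pow2_sqrt, plus_INR by apply pos_INR; reflexivity).
    assert (0 <= x) by apply sqrt_pos. assert (0 <= y) by apply sqrt_pos.
    apply sqr_sub_lt_of_sqr_diff; [split; nra | lra |].
    replace (y ^ 2 - x ^ 2) with Q by lra.
    replace (Q ^ 2) with (2 * s ^ 2 * T) by (unfold T; field; lra).
    rewrite Hx2. apply Rmult_lt_compat_l; [nra | lra]. }
  set (eps := Q * Rabs th) in Hsmall.
  assert (Heps : eps ^ 2 < s ^ 2 * s ^ 2 / 2809).
  { assert (0 <= eps) by (unfold eps; pose proof (Rabs_pos th); nra).
    replace (s ^ 2 * s ^ 2 / 2809) with ((s ^ 2 / 53) ^ 2) by field. nra. }
  assert (Heps2 : eps ^ 2 = Q ^ 2 * th ^ 2) by (unfold eps; rewrite Rpow_mult_distr, pow2_abs; reflexivity).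
  assert (Hth : (2 * INR m + Q) * th ^ 2 <= eps ^ 2 / s ^ 2 + 3 * eps ^ 2).
  { pose proof (pow2_ge_0 th).
    assert (th ^ 2 <= Q * th ^ 2) by (rewrite <- (Rmult_1_l (th ^ 2)) at 1; apply Rmult_le_compat_r; lra).
    assert (Q * th ^ 2 <= eps ^ 2) by (rewrite Heps2; apply Rmult_le_compat_r; nra).
    replace (eps ^ 2 / s ^ 2) with (2 * T * th ^ 2) by (rewrite Heps2; unfold T; field; lra).
    nra. }
  assert (Heps_s : eps ^ 2 / s ^ 2 < s ^ 2 / 2809).
  { apply (Rmult_lt_reg_r (s ^ 2)); [nra|]. unfold Rdiv. rewrite Rmult_assoc, Rinv_l by nra. lra. }
  assert (Hs4 : s ^ 2 * s ^ 2 <= s ^ 2 * 4) by (apply Rmult_le_compat_l; nra).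
  apply sqrt_lt_of_lt_sqr; [lra|]. nra.
Qed.

Lemma bad_approx_const_of_unif_discrete (alpha s : R) :
  unif_discrete (inX alpha) s -> bad_approx_const alpha (s ^ 2 / 53).
Proof.
  intros Hdisc. pose proof (unif_discrete_X_lt_2 alpha s Hdisc) as Hs2. pose proof Hdisc as [Hs _].
  split; [apply Rdiv_lt_0_compat; nra|].
  intros p q Hq. apply Rnot_lt_ge. intros Hsmall.
  destruct (Xpt_close_of_good_approx alpha s q p ltac:(lra) Hq Hsmall) as [m [Hm Hclose]].
  assert (Heq : Xpt alpha (m + q) = Xpt alpha m)
    by (apply (unif_discrete_eq (inX alpha) s); [exact Hdisc | exists (m + q)%nat; split; [lia | auto] | exists m; auto | exact Hclose]).
  apply Xpt_inj in Heq. lia.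
Qed.

Theorem theorem3 (alpha : R) (Halpha : 0 <= alpha < 1) :
  (* (a) *)
  (forall B : Z, (0 < B)%Z -> bad_approx alpha -> pq_bounded alpha B ->
     rel_dense (inX alpha) (6 * sqrt (IZR B))) /\
  (* (b) *)
  (forall r : R, rel_dense (inX alpha) r ->
     bad_approx alpha /\ pq_bounded alpha (Int_part (96 * r ^ 2))) /\
  (* (c) *)
  (forall C : R, bad_approx_const alpha C ->
     unif_discrete (inX alpha) (sqrt C / 2)) /\
  (* (d) *)
  (forall s : R, unif_discrete (inX alpha) s ->
     bad_approx_const alpha (s ^ 2 / 53)).
Proof.
  split; [|split; [|split]].
  - intros B HB. exact (X_rel_dense_of_pq_bounded alpha B Halpha HB).
  - intros r Hdense. split.
    + exists (/ (96 * r ^ 2)). exact (bad_approx_const_of_rel_dense alpha r Hdense).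
    + exact (pq_bounded_of_rel_dense alpha r Halpha Hdense).
  - intros C. exact (X_unif_discrete_of_bad_approx_const alpha C Halpha).
  - intros s. exact (bad_approx_const_of_unif_discrete alpha s).
Qed.
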